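(* Let $\ell$ be a positive odd integer and $n\ge 3$ an integer. Suppose there exist $k$ distinct primes $p_1,\dots,p_k\in P(n)$ such that any two of the numbers $p_1-1,\dots,p_k-1$ have no common odd prime factor. If $\Omega_\ell(n)$ is a powerful number, then $\ell$ has at least $k$ distinct prime factors.
   Context: A positive integer $a$ is called a powerful number if for every prime $p$, $p\mid a$ implies $p^2\mid a$. $\Omega_\ell(n)=\prod_{a=1}^{n}(a^\ell+1)$. For a positive integer $n$, $P(n)$ denotes the set of primes $p$ with $\frac{n+1}{2}<p\le n+1$. *)

From mathcomp Require Import all_boot.
Set Implicit Arguments. Unset Strict Implicit. Unset Printing Implicit Defensive.

Definition powerful (a : nat) : Prop :=
  0 < a /\ forall p, prime p -> p %| a -> p ^ 2 %| a.

Definition Omega (l n : nat) : nat := \prod_(1 <= a < n.+1) (a ^ l + 1).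

Definition inP (n p : nat) : bool := prime p && (n.+1 < 2 * p) && (p <= n.+1).

From mathcomp Require Import all_boot all_algebra all_field.
From mathcomp Require Import zify ring.
Set Implicit Arguments. Unset Strict Implicit. Unset Printing Implicit Defensive.
Import GRing.Theory.

(* To every
   prime p of P(n) we attach a prime of l:
   - if some prime q of l divides p - 1, we take such a q;
   - otherwise gcd(l, p - 1) = 1, so x |-> x^l is injective on F_p and
     p | a^l + 1 forces a = -1 mod p.  Since (n+1)/2 < p <= n+1, the only
     factor of Omega_l(n) divisible by p is (p-1)^l + 1, hence p^2 divides it;
     expanding (p-1)^l + 1 = lp mod p^2 gives p | l, and we take p itself.
   The pairwise hypothesis on the p_i - 1, together with the fact that an odd
   prime of P(n) never divides p - 1 for another p of P(n), makes this
   assignment injective, whence k <= #(primes of l). *)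

Local Open Scope ring_scope.

Lemma expf_coprime_inj (F : finFieldType) (l : nat) (x y : F) :
  (0 < l)%N -> coprime l #|F|.-1 -> x ^+ l = y ^+ l -> x = y.
Proof.
move=> l_gt0 cop exy.
have card_pred_gt0 : (0 < #|F|.-1)%N by case: #|F| (finNzRing_gt1 F) => [|[|]].
have fermat (z : F) : z != 0 -> z ^+ #|F|.-1 = 1.
  move=> z0; apply: (mulIf z0).
  by rewrite mul1r -exprSr prednK ?expf_card // ltnW // finNzRing_gt1.
have [a _ /dvdnP [c hc]] := Bezoutr l card_pred_gt0; rewrite (eqP cop) in hc.
have inv (z : F) : z != 0 -> z * (z ^+ l) ^+ a = 1.
  by move=> z0; rewrite -exprM -exprS mulnC -add1n hc mulnC exprM fermat ?expr1n.
have [x0 | nx0] := eqVneq x 0.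
  by move/eqP: exy; rewrite x0 expr0n gtn_eqF // eq_sym expf_eq0 l_gt0 => /eqP.
have ny0 : y != 0.
  by apply: contra_neq (expf_neq0 l nx0) => y0; rewrite exy y0 expr0n gtn_eqF.
apply: (mulIf (x := (x ^+ l) ^+ a)); first exact/expf_neq0/expf_neq0.
by rewrite /= inv // exy inv.
Qed.

Lemma dvdn_Fp (p m : nat) : prime p -> (p %| m)%N = (m%:R == 0 :> 'F_p).
Proof. by move=> pp; rewrite (dvdn_pcharf (pchar_Fp pp)). Qed.

Lemma prime_dvd_pow_add1 (p l a : nat) : prime p -> odd l -> coprime l p.-1 ->
  (p %| a ^ l + 1)%N -> (p %| a.+1)%N.
Proof.
move=> pp ol cop; rewrite !(dvdn_Fp _ pp) -[a.+1]addn1 !natrD natrX !addr_eq0.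
have l_gt0 : (0 < l)%N by rewrite lt0n; apply: contraTneq ol => ->.
move=> /eqP hx; apply/eqP; apply: (expf_coprime_inj l_gt0); first by rewrite card_Fp.
by rewrite hx -signr_odd ol expr1.
Qed.

Lemma exp1B_trunc (R : comPzRingType) (x : R) (j : nat) :
  exists t : R, (1 - x) ^+ j = 1 - x *+ j + x ^+ 2 * t.
Proof.
elim: j => [|j [t ht]]; first by exists 0; rewrite expr0 mulr0 subr0 addr0.
by exists (j%:R + t - x * t); rewrite exprSr ht mulrSr; ring.
Qed.

Lemma pred_pow_add1_expand (p l : nat) : (0 < p)%N -> odd l ->
  exists t : int, (p.-1 ^ l + 1)%N%:Z = p%:Z * (l%:Z - p%:Z * t).
Proof.
move=> p_gt0 ol; have [t ht] := exp1B_trunc (p%:R : int) l.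
exists t; rewrite -!natz natrD natrX -subn1 natrB // -opprB exprNn -signr_odd ol.
by rewrite expr1 mulN1r ht -mulr_natr; ring.
Qed.

Lemma dvd_pred_pow_add1 (p l : nat) : (0 < p)%N -> odd l -> (p %| p.-1 ^ l + 1)%N.
Proof.
move=> p_gt0 ol; have [t def_pow] := pred_pow_add1_expand p_gt0 ol.
have : (p%:Z %| (p.-1 ^ l + 1)%N%:Z)%Z by rewrite def_pow dvdz_mulr.
by rewrite dvdzE !absz_nat.
Qed.

Lemma sqr_dvd_pred_pow_add1 (p l : nat) : (0 < p)%N -> odd l ->
  (p ^ 2 %| p.-1 ^ l + 1)%N -> (p %| l)%N.
Proof.
move=> p_gt0 ol dvd_sq; have [t def_pow] := pred_pow_add1_expand p_gt0 ol.
have : (p%:Z * p%:Z %| p%:Z * (l%:Z - p%:Z * t))%Z.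
  by rewrite -def_pow -PoszM dvdzE !absz_nat.
rewrite dvdz_mul2l ?eqz_nat -?lt0n // => /(rpredD (dvdz_mulr t (dvdzz p%:Z))).
by rewrite addrC subrK dvdzE !absz_nat.
Qed.

Local Close Scope ring_scope.

Lemma dvd_lt_double (d m : nat) : 0 < m -> m < d.*2 -> d %| m -> m = d.
Proof. by move=> m_gt0 m_lt /dvdnP [[|[|c]] hc]; lia. Qed.

Lemma Omega_pfactor (l n p : nat) : odd l -> inP n p -> coprime l p.-1 ->
  exists2 r, Omega l n = (p.-1 ^ l + 1) * r & coprime p r.
Proof.
move=> ol /andP [/andP [pp p_big] p_le] cop.
have mem_pred : p.-1 \in index_iota 1 n.+1.
  by rewrite mem_index_iota; have := prime_gt1 pp; lia.
rewrite /Omega (bigD1_seq _ mem_pred (iota_uniq _ _)) /=.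
eexists; first reflexivity.
rewrite prime_coprime // Euclid_dvd_prod // big_seq_cond big1 // => a.
rewrite mem_index_iota => /andP [a_in a_ne]; apply/negbTE/negP.
move/(prime_dvd_pow_add1 pp ol cop)/dvd_lt_double => a_eq.
by move/eqP: a_ne; apply; rewrite -a_eq //; lia.
Qed.

Lemma powerful_coprime_part (m r p : nat) : powerful (m * r) -> prime p ->
  p %| m -> coprime p r -> p ^ 2 %| m.
Proof.
move=> [_ pw] pp pm cop; have := pw p pp (dvdn_mulr _ pm).
by rewrite Gauss_dvdl // coprimeXl.
Qed.

Lemma inP_dvd_l (l n p : nat) : odd l -> inP n p -> powerful (Omega l n) ->
  coprime l p.-1 -> p %| l.
Proof.
move=> ol pP pw cop; have pp : prime p by case/andP: pP => /andP [].
have [r def_Omega cop_r] := Omega_pfactor ol pP cop.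
apply: (sqr_dvd_pred_pow_add1 (prime_gt0 pp) ol).
apply: (powerful_coprime_part _ pp _ cop_r); first by rewrite -def_Omega.
exact: dvd_pred_pow_add1 (prime_gt0 pp) ol.
Qed.

Lemma odd_prime_of_odd (l q : nat) : odd l -> q \in primes l -> odd q.
Proof.
move=> ol; rewrite mem_primes => /and3P [_ _ q_dvd_l].
rewrite -[odd q]negbK -dvdn2; apply: contraL ol => /dvdn_trans/(_ q_dvd_l).
by rewrite dvdn2.
Qed.

Lemma inP_odd_ndvd_pred (n x y : nat) : inP n x -> inP n y -> odd y ->
  ~~ (y %| x.-1).
Proof.
move=> /andP [/andP [xp _] x_le] /andP [/andP [yp y_big] _] oy.
apply/negP => y_dvd; have x_gt1 := prime_gt1 xp.
have x_eq : x.-1 = y by apply: dvd_lt_double y_dvd; lia.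
case: (even_prime xp) => [x2 | ].
  by move: yp; rewrite -x_eq x2.
by rewrite -(prednK (prime_gt0 xp)) x_eq /= oy.
Qed.

(* The prime of l attached to p: a prime of l dividing p - 1 if there is one,
   and p itself otherwise (which is then a prime of l, see l_witnessP). *)
Definition l_witness (l p : nat) : nat := head p [seq q <- primes l | q %| p.-1].

Lemma l_witnessP (l n p : nat) : odd l -> inP n p -> powerful (Omega l n) ->
  l_witness l p \in primes l /\ (l_witness l p %| p.-1 \/ l_witness l p = p).
Proof.
move=> ol pP pw; have pp : prime p by case/andP: pP => /andP [].
rewrite /l_witness; case E: [seq q <- primes l | q %| p.-1] => [|q s] /=.
  split; last by right.
  have l_gt0 : 0 < l by rewrite lt0n; apply: contraTneq ol => ->.
  rewrite mem_primes pp l_gt0 /=; apply: (inP_dvd_l ol pP pw).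
  have p1_gt0 : 0 < p.-1 by have := prime_gt1 pp; lia.
  rewrite coprime_has_primes //.
  apply/hasPn => q; rewrite mem_primes => /and3P [_ _ q_dvd]; apply/negP => ql.
  have : q \in [seq q <- primes l | q %| p.-1] by rewrite mem_filter ql q_dvd.
  by rewrite E.
have : q \in [seq q <- primes l | q %| p.-1] by rewrite E mem_head.
by rewrite mem_filter => /andP [q_dvd ql]; split; last left.
Qed.

Lemma l_witness_inj (l n : nat) (ps : seq nat) : odd l -> powerful (Omega l n) ->
  {in ps, forall p, inP n p} ->
  {in ps &, forall x y, x != y ->
     forall q, prime q -> odd q -> ~ (q %| x.-1 /\ q %| y.-1)} ->
  {in ps &, injective (l_witness l)}.
Proof.
move=> ol pw psP disj x y xin yin q_eq; case: (eqVneq x y) => // nxy; exfalso.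
have [ql qx] := l_witnessP ol (psP x xin) pw.
have [_ qy] := l_witnessP ol (psP y yin) pw; rewrite -q_eq in qy.
set q := l_witness l x in ql qx qy.
have q_odd := odd_prime_of_odd ol ql.
have q_prime : prime q by move: ql; rewrite mem_primes => /andP [].
case: qx qy => [qx | qx] [qy | qy].
- exact: (disj x y xin yin nxy q q_prime q_odd).
- move: (inP_odd_ndvd_pred (psP x xin) (psP y yin)).
  by rewrite -qy => /(_ q_odd)/negP/(_ qx).
- move: (inP_odd_ndvd_pred (psP y yin) (psP x xin)).
  by rewrite -qx => /(_ q_odd)/negP/(_ qy).
- by rewrite -qx -qy eqxx in nxy.
Qed.

Theorem lemma3 (l n k : nat) (ps : seq nat) :
  odd l -> 3 <= n ->
  size ps = k -> uniq ps ->
  (forall p, p \in ps -> inP n p) ->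
  (forall i j, i < k -> j < k -> i != j ->
     forall q, prime q -> odd q ->
       ~ (q %| (nth 0 ps i).-1 /\ q %| (nth 0 ps j).-1)) ->
  powerful (Omega l n) ->
  k <= size (primes l).
Proof.
move=> ol _ sz uq psP hq pw.
have disj : {in ps &, forall x y, x != y ->
    forall q, prime q -> odd q -> ~ (q %| x.-1 /\ q %| y.-1)}.
  move=> x y xin yin nxy; rewrite -(nth_index 0 xin) -(nth_index 0 yin).
  apply: hq; rewrite -?sz ?index_mem //.
  by apply: contra_neq nxy => /(congr1 (nth 0 ps)); rewrite !nth_index.
rewrite -sz -(size_map (l_witness l)); apply: uniq_leq_size.
  by rewrite (map_inj_in_uniq (l_witness_inj ol pw psP disj)).
by move=> _ /mapP [p pin ->]; have [] := l_witnessP ol (psP p pin) pw.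
Qed.
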